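(* Consider the FlexPD-C iterates described in the context with $\beta>0$, integer $T\ge1$ and $0<\alpha<1/\rho(B)$, and let $C=\sum_{t=0}^{T-1}(I-\alpha B)^t$, $M=C^{-1}(I-\alpha B)^T$, $N=\frac{1}{\alpha}(C^{-1}-M)$. Then for any $\eta_4>0$ and every $k\ge0$, \[\|x^{k+1}-x^*\|_{P_C}^2+\|x^{k+1}-x^k\|_{Q_C}^2\le\|x^k-x^*\|_M^2-\|x^{k+1}-x^*\|_M^2+\frac{\alpha}{\beta}\Big(\|\lambda^k-\lambda^*\|^2-\|\lambda^{k+1}-\lambda^*\|^2\Big),\] where $P_C=2\alpha mI-\alpha\eta_4I+2\alpha N-\alpha\beta A'A$ and $Q_C=M-\frac{\alpha L^2}{\eta_4}I$.
   Context: Setting: $n$ agents are connected by a connected undirected graph with edge set $\mathcal E$, $\epsilon=|\mathcal E|$. For $x\in\mathbb R^n$ let $f(x)=\sum_{i=1}^n f_i(x_i)$, where each $f_i:\mathbb R\to\mathbb R$ is twice differentiable with $m\le f_i''\le L$ for constants $0<m\le L$; $\nabla f(x)=(f_1'(x_1),\dots,f_n'(x_n))'$. $A\in\mathbb R^{\epsilon\times n}$ is the edge–node incidence matrix (null space spanned by the all-ones vector). $B\in\mathbb R^{n\times n}$ is symmetric positive semidefinite with the same null space as $A$, off-diagonal entries nonzero only on edges; $\rho(B)$ is its largest eigenvalue. $x^*$ is the unique minimizer of $f$ subject to $Ax=0$ and $\lambda^*$ a Lagrange multiplier with $\nabla f(x^* )+A'\lambda^*=0$, $Ax^*=0$, $Bx^*=0$,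 chosen in the column space of $A$. FlexPD-C: given $\alpha,\beta>0$, $T\ge1$, $x^0$ arbitrary, $\lambda^0=0$; for $k\ge0$: $x^{k+1,0}=x^k$; for $t=1,\dots,T$, $x^{k+1,t}=x^{k+1,t-1}-\alpha\nabla f(x^k)-\alpha A'\lambda^k-\alpha Bx^{k+1,t-1}$; then $x^{k+1}=x^{k+1,T}$, $\lambda^{k+1}=\lambda^k+\beta Ax^{k+1}$. Notation: $\|v\|_S^2:=v'Sv$ for any symmetric $S$; $\|\cdot\|$ Euclidean norm. *)

From HB Require Import structures.
From mathcomp Require Import all_boot all_order all_algebra.
From mathcomp Require Import all_classical all_reals all_analysis.
Set Implicit Arguments. Unset Strict Implicit. Unset Printing Implicit Defensive.
Import Order.TTheory GRing.Theory Num.Theory.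
Local Open Scope ring_scope.

Section Defs.
Variable R : realType.

(* Undirected graph on nodes 'I_n with edges 'I_eps; edge e joins
   src e and dst e (orientation is arbitrary, as for an incidence matrix). *)
Definition adj n eps (src dst : 'I_eps -> 'I_n) : rel 'I_n :=
  fun i j => [exists e, ((src e == i) && (dst e == j)) || ((src e == j) && (dst e == i))].

Definition simple_connected_graph n eps (src dst : 'I_eps -> 'I_n) : Prop :=
  (forall e, src e != dst e) /\
  (forall e e', (src e == src e' /\ dst e == dst e') \/ (src e == dst e' /\ dst e == src e') -> e = e') /\
  (forall i j, connect (adj src dst) i j).

Definition incidence n eps (src dst : 'I_eps -> 'I_n) : 'M[R]_(eps, n) :=
  \matrix_(e, i) ((i == src e)%:R - (i == dst e)%:R).

Definition sqnormS n (S : 'M[R]_n) (v : 'cV[R]_n) : R := (v^T *m S *m v) 0 0.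
Definition sqnorm k (v : 'cV[R]_k) : R := (v^T *m v) 0 0.

Definition is_largest_eigenvalue n (B : 'M[R]_n) (rho : R) : Prop :=
  (exists2 v : 'cV[R]_n, v != 0 & B *m v = rho *: v) /\
  (forall (a : R) (v : 'cV[R]_n), v != 0 -> B *m v = a *: v -> a <= rho).

Definition psd n (B : 'M[R]_n) : Prop := B^T = B /\ forall v : 'cV[R]_n, 0 <= sqnormS B v.

Definition gradf n (f : 'I_n -> R -> R) (x : 'cV[R]_n) : 'cV[R]_n :=
  \col_i (derive1 (f i) (x i 0)).

Definition fsum n (f : 'I_n -> R -> R) (x : 'cV[R]_n) : R := \sum_i f i (x i 0).

End Defs.

From HB Require Import structures.
From mathcomp Require Import all_boot all_order all_algebra.
From mathcomp Require Import all_classical all_reals all_analysis.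
From mathcomp Require Import ring lra.
Import Order.TTheory GRing.Theory Num.Theory.
Local Open Scope ring_scope.

(* Unrolling the T inner steps with W := 1 - alpha B gives
   x^{k+1} = W^T x^k - alpha C g^k for g^k := grad f(x^k) + A' lambda^k, i.e.
   C^-1 x^{k+1} = M x^k - alpha g^k.  As W xs = xs and grad f(xs) = - A' lams,
   this is the identity
     alpha N e + M d = - alpha (grad f(x^k) - grad f(xs)) - alpha A' (lambda^k - lams)
   with e := x^{k+1} - xs and d := x^{k+1} - x^k.  Pair it with e: the gradient
   term is bounded coordinatewise by the mean value theorem and Young's inequality
   with weight eta4, the symmetry of M turns 2 e'M d into a difference of M-norms,
   and the multiplier update turns the A'-term into a difference of lambda-norms.
   C is invertible: C v = 0 forces W^T v = v, and a symmetric W without the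
   eigenvalue -1 (which alpha rho < 1 excludes) then fixes v, so C v = T v. *)

Set Implicit Arguments. Unset Strict Implicit. Unset Printing Implicit Defensive.

Section VectorDot.
Variable R : realDomainType.

Definition vdot n (u v : 'cV[R]_n) : R := (u^T *m v) 0 0.

Lemma vdotE n (u v : 'cV[R]_n) : vdot u v = \sum_i u i 0 * v i 0.
Proof. by rewrite /vdot mxE; apply: eq_bigr => i _; rewrite mxE. Qed.

Lemma vdotC n (u v : 'cV[R]_n) : vdot u v = vdot v u.
Proof. by rewrite !vdotE; apply: eq_bigr => i _; rewrite mulrC. Qed.

Lemma vdotDr n (u v w : 'cV[R]_n) : vdot u (v + w) = vdot u v + vdot u w.
Proof. by rewrite /vdot mulmxDr mxE. Qed.

Lemma vdotZr n (u v : 'cV[R]_n) a : vdot u (a *: v) = a * vdot u v.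
Proof. by rewrite /vdot -scalemxAr mxE. Qed.

Lemma vdotNr n (u v : 'cV[R]_n) : vdot u (- v) = - vdot u v.
Proof. by rewrite -scaleN1r vdotZr mulN1r. Qed.

Lemma vdotBr n (u v w : 'cV[R]_n) : vdot u (v - w) = vdot u v - vdot u w.
Proof. by rewrite vdotDr vdotNr. Qed.

Lemma vdotDl n (u v w : 'cV[R]_n) : vdot (v + w) u = vdot v u + vdot w u.
Proof. by rewrite vdotC vdotDr !(vdotC u). Qed.

Lemma vdotZl n (u v : 'cV[R]_n) a : vdot (a *: v) u = a * vdot v u.
Proof. by rewrite vdotC vdotZr vdotC. Qed.

Lemma vdotBl n (u v w : 'cV[R]_n) : vdot (v - w) u = vdot v u - vdot w u.
Proof. by rewrite vdotC vdotBr !(vdotC u). Qed.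

Lemma vdot_mulmx n p (u : 'cV[R]_n) (S : 'M[R]_(n, p)) v :
  vdot u (S *m v) = vdot (S^T *m u) v.
Proof. by rewrite /vdot trmx_mul trmxK mulmxA. Qed.

Lemma vdot_self_ge0 n (u : 'cV[R]_n) : 0 <= vdot u u.
Proof. by rewrite vdotE; apply: sumr_ge0 => i _; rewrite -expr2 sqr_ge0. Qed.

Lemma vdot_self_eq0 n (u : 'cV[R]_n) : vdot u u = 0 -> u = 0.
Proof.
rewrite vdotE => /psumr_eq0P u0; apply/matrixP => i j; rewrite ord1 mxE.
by apply/eqP; rewrite -sqrf_eq0 expr2 u0 // => k _; rewrite -expr2 sqr_ge0.
Qed.

End VectorDot.

Lemma trmxX (R : comPzRingType) n (W : 'M[R]_n) k : (W ^+ k)^T = W^T ^+ k.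
Proof.
elim: k => [|k IHk]; first by rewrite !expr0 -idmxE trmx1.
by rewrite exprS -mulmxE trmx_mul IHk mulmxE -exprSr.
Qed.

Lemma subrX1C (R : pzRingType) (x : R) n :
  x ^+ n - 1 = (\sum_(i < n) x ^+ i) * (x - 1).
Proof.
rewrite subrX1; apply: commr_sum => i _; apply: commrX.
by apply/commr_sym/commrB; [exact: commr_refl | exact: commr1].
Qed.

Lemma inj_unitmx (F : fieldType) n (A : 'M[F]_n) :
  (forall v : 'cV_n, A *m v = 0 -> v = 0) -> A \in unitmx.
Proof.
move=> Ainj; rewrite -unitmx_tr -row_free_unit; apply: inj_row_free => v.
move=> /(congr1 trmx); rewrite trmx_mul trmxK trmx0 => /Ainj/(congr1 trmx).
by rewrite trmxK trmx0.
Qed.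

Section SymmetricPowers.
Variables (R : realFieldType) (n : nat) (W : 'M[R]_n).
Hypothesis W_sym : W^T = W.

Lemma sum_sqr_powers_mulmx_eq0 T (y : 'cV[R]_n) : (0 < T)%N ->
  (\sum_(j < T) (W ^+ 2) ^+ j) *m y = 0 -> y = 0.
Proof.
case: T => // T _ Qy; apply: vdot_self_eq0; apply/eqP.
have : vdot y (\sum_(j < T.+1) (W ^+ 2) ^+ j *m y) = 0.
  by rewrite -mulmx_suml Qy /vdot mulmx0 mxE.
rewrite /vdot mulmx_sumr summxE big_ord_recl expr0 -idmxE mul1mx.
have sq j : (y^T *m ((W ^+ 2) ^+ j *m y)) 0 0 = vdot (W ^+ j *m y) (W ^+ j *m y).
  by rewrite exprAC expr2 -mulmxE -mulmxA -/(vdot _ _) vdot_mulmx trmxX W_sym.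
under eq_bigr do rewrite sq.
move=> /eqP; rewrite paddr_eq0 ?vdot_self_ge0 //; first by case/andP.
by apply: sumr_ge0 => j _; exact: vdot_self_ge0.
Qed.

Lemma sqr_fixed_of_exp_fixed T (v : 'cV[R]_n) : (0 < T)%N ->
  W ^+ T *m v = v -> W ^+ 2 *m v = v.
Proof.
move=> T0 WTv; apply/eqP; rewrite -subr_eq0; apply/eqP.
rewrite -[v in _ - v]mul1mx -mulmxBl.
apply: (@sum_sqr_powers_mulmx_eq0 T) => //.
rewrite mulmxA mulmxE -subrX1C exprAC expr2 -mulmxE mulmxBl -mulmxA !WTv.
by rewrite -idmxE mul1mx subrr.
Qed.

Lemma fixed_of_sqr_fixed (v : 'cV[R]_n) :
  (forall u : 'cV[R]_n, W *m u = - u -> u = 0) -> W ^+ 2 *m v = v -> W *m v = v.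
Proof.
move=> no_neg W2v; apply/eqP; rewrite -subr_eq0; apply/eqP/no_neg.
by rewrite mulmxBr mulmxA mulmxE -expr2 W2v opprB.
Qed.

Lemma sum_powers_mulmx_eq0 T (v : 'cV[R]_n) : (0 < T)%N ->
  (forall u : 'cV[R]_n, W *m u = - u -> u = 0) ->
  (\sum_(t < T) W ^+ t) *m v = 0 -> v = 0.
Proof.
move=> T0 no_neg Cv.
have WTv : W ^+ T *m v = v.
  apply/eqP; rewrite -subr_eq0 -[v in _ - v]mul1mx -mulmxBl idmxE subrX1.
  by rewrite -mulmxE -mulmxA Cv mulmx0.
have Wv := fixed_of_sqr_fixed no_neg (sqr_fixed_of_exp_fixed T0 WTv).
have Wtv t : W ^+ t *m v = v.
  elim: t => [|t IHt]; first by rewrite expr0 -idmxE mul1mx.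
  by rewrite exprSr -mulmxE -mulmxA Wv.
move: Cv; rewrite mulmx_suml; under eq_bigr do rewrite Wtv.
rewrite sumr_const card_ord -scaler_nat => /eqP.
by rewrite scaler_eq0 pnatr_eq0 eqn0Ngt T0 => /eqP.
Qed.

End SymmetricPowers.

Lemma eigenvector_neg1_eq0 (R : realFieldType) n (B : 'M[R]_n) (rho alpha : R) :
  (forall (a : R) (v : 'cV[R]_n), v != 0 -> B *m v = a *: v -> a <= rho) ->
  0 < alpha -> alpha * rho < 2 ->
  forall u : 'cV[R]_n, (1%:M - alpha *: B) *m u = - u -> u = 0.
Proof.
move=> rho_max alpha0 alpha_rho u; rewrite mulmxBl mul1mx -scalemxAl => Wu.
apply/eqP; apply: contraT => u_neq0.
have aBu : alpha *: (B *m u) = 2 *: u.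
  by apply/matrixP => i j; have := congr1 (fun w : 'cV[R]_n => w i j) Wu; rewrite !mxE; lra.
have Bu : B *m u = (2 / alpha) *: u.
  by rewrite mulrC -scalerA -aBu scalerA mulVf ?gt_eqF // scale1r.
have := rho_max _ _ u_neq0 Bu; rewrite ler_pdivrMr //; lra.
Qed.

Section MeanValue.
Variable R : realType.

Lemma derivable_MVT (g : R -> R) p q : (forall x, derivable g x 1) ->
  exists c, g q - g p = derive1 g c * (q - p).
Proof.
move=> dg; wlog pq : p q / p <= q.
  move=> MVTle; case: (leP p q) => [|/ltW qp]; first exact: MVTle.
  by have [c Hc] := MVTle q p qp; exists c; rewrite -opprB Hc -mulrN opprB.
have g'E (z : R) : is_derive z (1 : R) g (derive1 g z) by rewrite derive1E; exact: derivableP.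
have [c _ ->] := MVT_segment pq (fun z _ => g'E z)
  (derivable_within_continuous (fun z _ => dg z)).
by exists c.
Qed.

Lemma secant_ge_of_derive1_ge (g : R -> R) m p q : (forall x, derivable g x 1) ->
  (forall x, m <= derive1 g x) -> m * (q - p) ^+ 2 <= (g q - g p) * (q - p).
Proof.
move=> dg g'_ge; have [c ->] := derivable_MVT p q dg.
by rewrite -mulrA -expr2 ler_wpM2r ?sqr_ge0.
Qed.

Lemma secant_sqr_le_of_derive1_le (g : R -> R) L p q : (forall x, derivable g x 1) ->
  (forall x, `|derive1 g x| <= L) -> (g q - g p) ^+ 2 <= L ^+ 2 * (q - p) ^+ 2.
Proof.
move=> dg g'_le; have [c ->] := derivable_MVT p q dg.
rewrite exprMn ler_wpM2r ?sqr_ge0 //.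
have /ler_normlP[lo hi] := g'_le c; nra.
Qed.

Lemma secant_pairing_ge (g : R -> R) m L eta a b c :
  (forall x, derivable g x 1) -> (forall x, m <= derive1 g x) ->
  (forall x, `|derive1 g x| <= L) -> 0 < eta ->
  (2 * m - eta) * (a - c) ^+ 2 - L ^+ 2 / eta * (a - b) ^+ 2
    <= 2 * ((a - c) * (g b - g c)).
Proof.
move=> dg g'_ge g'_le eta0.
have mono := secant_ge_of_derive1_ge c a dg g'_ge.
have lip := secant_sqr_le_of_derive1_le a b dg g'_le.
set s := a - c in mono *; set u := g b - g a in lip.
have young : - (eta * s ^+ 2) - u ^+ 2 / eta <= 2 * s * u.
  have : 0 <= (eta * s + u) ^+ 2 / eta by rewrite divr_ge0 ?sqr_ge0 ?ltW.
  have -> : (eta * s + u) ^+ 2 / eta = eta * s ^+ 2 + 2 * s * u + u ^+ 2 / eta.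
    by field; rewrite gt_eqF.
  lra.
have lip' : u ^+ 2 / eta <= L ^+ 2 / eta * (a - b) ^+ 2.
  by rewrite [leRHS]mulrAC ler_pM2r ?invr_gt0 // -[a - b]opprB sqrrN.
have -> : g b - g c = (g a - g c) + u by rewrite /u; ring.
nra.
Qed.

End MeanValue.

Lemma gradf_pairing_ge (R : realType) n (f : 'I_n -> R -> R) m L eta (x y z : 'cV[R]_n) :
  0 <= m -> (forall i t, derivable (derive1 (f i)) t 1) ->
  (forall i t, m <= derive1 (derive1 (f i)) t <= L) -> 0 < eta ->
  (2 * m - eta) * vdot (x - z) (x - z) - L ^+ 2 / eta * vdot (x - y) (x - y)
    <= 2 * vdot (x - z) (gradf f y - gradf f z).
Proof.
move=> m0 df' f''_bnd eta0; rewrite !vdotE !mulr_sumr -sumrB.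
apply: ler_sum => i _; rewrite !mxE -!expr2.
have f''_ge t : m <= derive1 (derive1 (f i)) t by case/andP: (f''_bnd i t).
have f''_le t : `|derive1 (derive1 (f i)) t| <= L.
  by case/andP: (f''_bnd i t) => m_le le_L; rewrite ger0_norm // (le_trans m0).
exact: secant_pairing_ge.
Qed.

Section SquaredNorms.
Variable R : realType.

Lemma sqnormE k (v : 'cV[R]_k) : sqnorm v = vdot v v.
Proof. by []. Qed.

Lemma sqnormSE n (S : 'M[R]_n) v : sqnormS S v = vdot v (S *m v).
Proof. by rewrite /sqnormS /vdot mulmxA. Qed.

Lemma sqnormS_sub n (S : 'M[R]_n) (u v : 'cV[R]_n) : S^T = S ->
  sqnormS S (u - v) = sqnormS S u - 2 * vdot u (S *m v) + sqnormS S v.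
Proof.
move=> S_sym; rewrite !sqnormSE mulmxBr vdotBl !vdotBr.
rewrite [vdot v (S *m u)]vdot_mulmx S_sym (vdotC (S *m v)); ring.
Qed.

Lemma sqnormDZ k (u v : 'cV[R]_k) a :
  sqnorm (u + a *: v) = sqnorm u + 2 * a * vdot v u + a ^+ 2 * sqnorm v.
Proof. rewrite !sqnormE vdotDl !vdotDr !vdotZl !vdotZr (vdotC u v); ring. Qed.

End SquaredNorms.

Section FlexPDC.
Variables (R : realType) (n eps : nat) (A : 'M[R]_(eps, n)) (B : 'M[R]_n).
Variables (f : 'I_n -> R -> R) (alpha beta : R) (T : nat).
Variables (xs : 'cV[R]_n) (lams : 'cV[R]_eps).
Variables (x : nat -> 'cV[R]_n) (lam : nat -> 'cV[R]_eps).
Variable xin : nat -> nat -> 'cV[R]_n.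

Local Notation W := (1%:M - alpha *: B).
Local Notation C := (\sum_(t < T) W ^+ t).
Local Notation M := (invmx C *m W ^+ T).
Local Notation N := (alpha^-1 *: (invmx C - M)).
Local Notation g k := (gradf f (x k) + A^T *m lam k).

Hypothesis Hxin0 : forall k, xin k.+1 0%N = x k.
Hypothesis HxinS : forall k t, (t < T)%N ->
  xin k.+1 t.+1 = xin k.+1 t - alpha *: gradf f (x k)
                  - alpha *: (A^T *m lam k) - alpha *: (B *m xin k.+1 t).
Hypothesis Hx : forall k, x k.+1 = xin k.+1 T.

Lemma inner_step k t : (t < T)%N -> xin k.+1 t.+1 = W *m xin k.+1 t - alpha *: g k.
Proof.
move=> tT; rewrite HxinS // mulmxBl mul1mx -scalemxAl scalerDr.
by rewrite opprD addrA [LHS]addrAC [in LHS](addrAC (xin k.+1 t)).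
Qed.

Lemma inner_iterate k t : (t <= T)%N ->
  xin k.+1 t = W ^+ t *m x k - alpha *: ((\sum_(s < t) W ^+ s) *m g k).
Proof.
elim: t => [|t IHt] tT.
  by rewrite Hxin0 expr0 big_ord0 -idmxE mul1mx mul0mx scaler0 subr0.
rewrite inner_step // IHt 1?ltnW //.
set S := \sum_(s < t) W ^+ s.
have -> : \sum_(s < t.+1) W ^+ s = 1%:M + W *m S.
  rewrite big_ord_recl expr0 -idmxE mulmxE mulr_sumr.
  by congr (_ + _); apply: eq_bigr => s _; rewrite lift0 exprS.
set a := W ^+ t *m x k; set b := S *m g k.
have -> : W ^+ t.+1 *m x k = W *m a by rewrite /a mulmxA mulmxE -exprS.
rewrite [(1%:M + W *m S) *m _]mulmxDl mul1mx -mulmxA -/b.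
rewrite mulmxBr -scalemxAr.
by apply/matrixP => i j; rewrite !mxE; ring.
Qed.

Lemma outer_iterate k : x k.+1 = W ^+ T *m x k - alpha *: (C *m g k).
Proof. by rewrite Hx inner_iterate. Qed.

Hypothesis HBxs : B *m xs = 0.

Lemma Wexp_xs t : W ^+ t *m xs = xs.
Proof.
have Wxs : W *m xs = xs by rewrite mulmxBl mul1mx -scalemxAl HBxs scaler0 subr0.
elim: t => [|t IHt]; first by rewrite expr0 -idmxE mul1mx.
by rewrite exprSr -mulmxE -mulmxA Wxs.
Qed.

Variable rho : R.
Hypothesis HBsym : B^T = B.
Hypothesis Hrho : forall (a : R) (v : 'cV[R]_n), v != 0 -> B *m v = a *: v -> a <= rho.
Hypothesis Halpha : 0 < alpha.
Hypothesis Halpha_rho : alpha * rho < 1.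
Hypothesis HT : (0 < T)%N.

Lemma W_sym : W^T = W.
Proof. by rewrite linearB /= linearZ /= trmx1 HBsym. Qed.

Lemma C_unitmx : C \in unitmx.
Proof.
have alpha_rho2 : alpha * rho < 2 by apply: lt_trans Halpha_rho _; rewrite ltr1n.
apply/inj_unitmx => v; apply: (sum_powers_mulmx_eq0 W_sym HT).
exact: eigenvector_neg1_eq0 Hrho Halpha alpha_rho2.
Qed.

Lemma M_sym : M^T = M.
Proof.
have C_sym : C^T = C.
  by rewrite raddf_sum; apply: eq_bigr => t _; rewrite /= trmxX W_sym.
have CW : C *m W ^+ T = W ^+ T *m C.
  rewrite mulmxE; apply/commr_sym/commr_sum => t _.
  exact/commrX/commr_sym/commrX/commr_refl.
rewrite trmx_mul trmx_inv C_sym trmxX W_sym.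
by rewrite -[LHS](mulKmx C_unitmx) [C *m _]mulmxA CW -mulmxA mulmxV ?C_unitmx // mulmx1.
Qed.

Hypothesis Hkkt : gradf f xs + A^T *m lams = 0.

Lemma step_identity k :
  alpha *: (N *m (x k.+1 - xs)) + M *m (x k.+1 - x k)
  = - alpha *: (gradf f (x k) - gradf f xs) - alpha *: (A^T *m (lam k - lams)).
Proof.
have aN : alpha *: N = invmx C - M by rewrite scalerA mulfV ?gt_eqF // scale1r.
have Mxs : M *m xs = invmx C *m xs by rewrite -mulmxA Wexp_xs.
have Cx : invmx C *m x k.+1 = M *m x k - alpha *: g k.
  by rewrite outer_iterate mulmxBr mulmxA -scalemxAr mulKmx ?C_unitmx.
have grad_xs : gradf f xs = - (A^T *m lams) by apply/eqP; rewrite -addr_eq0 Hkkt.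
rewrite [alpha *: (N *m _)]scalemxAl aN !mulmxBl !mulmxBr Mxs Cx grad_xs.
by apply/matrixP => i j; rewrite !mxE; ring.
Qed.

Hypothesis HAxs : A *m xs = 0.
Hypothesis Hlam : forall k, lam k.+1 = lam k + beta *: (A *m x k.+1).
Hypothesis Hbeta : 0 < beta.
Variables m L : R.
Hypothesis Hm : 0 <= m.
Hypothesis Hdf' : forall i t, derivable (derive1 (f i)) t 1.
Hypothesis Hf'' : forall i t, m <= derive1 (derive1 (f i)) t <= L.

Lemma flexpd_c_descent eta k : 0 < eta ->
  sqnormS ((2 * alpha * m - alpha * eta)%:M + (2 * alpha) *: N
           - (alpha * beta) *: (A^T *m A)) (x k.+1 - xs)
  + sqnormS (M - (alpha * L ^+ 2 / eta)%:M) (x k.+1 - x k)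
  <= sqnormS M (x k - xs) - sqnormS M (x k.+1 - xs)
     + alpha / beta * (sqnorm (lam k - lams) - sqnorm (lam k.+1 - lams)).
Proof.
move=> eta0.
set PC := (_%:M + _ *: _ - _ *: _); set QC := (_ - (_ / eta)%:M).
set e := x k.+1 - xs; set d := x k.+1 - x k; set l := lam k - lams.
have pairing : alpha * vdot e (N *m e) + vdot e (M *m d)
    = - alpha * vdot e (gradf f (x k) - gradf f xs) - alpha * vdot (A *m e) l.
  have := congr1 (vdot e) (step_identity k).
  by rewrite vdotDr vdotBr !vdotZr [vdot e (A^T *m _)]vdot_mulmx trmxK.
have grad := gradf_pairing_ge (x k.+1) (x k) xs Hm Hdf' Hf'' eta0.
rewrite -/e -/d in grad.
have polar : sqnormS M (x k - xs) = sqnormS M e - 2 * vdot e (M *m d) + sqnormS M d.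
  rewrite -sqnormS_sub ?M_sym //; congr sqnormS.
  by apply/matrixP => i j; rewrite !mxE; ring.
have dual : alpha / beta * (sqnorm l - sqnorm (lam k.+1 - lams))
    = - (2 * alpha * vdot (A *m e) l) - alpha * beta * vdot (A *m e) (A *m e).
  have -> : lam k.+1 - lams = l + beta *: (A *m e).
    by rewrite Hlam /e mulmxBr HAxs subr0 /l addrAC.
  by rewrite sqnormDZ !sqnormE; field; rewrite gt_eqF.
have PCe : sqnormS PC e = (2 * alpha * m - alpha * eta) * vdot e e
    + 2 * alpha * vdot e (N *m e) - alpha * beta * vdot (A *m e) (A *m e).
  rewrite sqnormSE /PC mulmxBl mulmxDl mul_scalar_mx -!scalemxAl -mulmxA.
  by rewrite vdotBr vdotDr !vdotZr [vdot e (A^T *m _)]vdot_mulmx trmxK.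
have QCd : sqnormS QC d = vdot d (M *m d) - alpha * L ^+ 2 / eta * vdot d d.
  by rewrite sqnormSE /QC mulmxBl mul_scalar_mx vdotBr vdotZr.
rewrite PCe QCd polar dual !sqnormSE.
have := ler_wpM2l (ltW Halpha) grad.
lra.
Qed.

End FlexPDC.

Theorem lemma3p16 (R : realType) (n eps : nat)
  (src dst : 'I_eps -> 'I_n)
  (Hgraph : simple_connected_graph src dst)
  (f : 'I_n -> R -> R) (m L : R)
  (Hm : 0 < m) (HmL : m <= L)
  (Hdiff1 : forall i x, derivable (f i) x 1)
  (Hdiff2 : forall i x, derivable (derive1 (f i)) x 1)
  (Hbnd : forall i x, m <= derive1 (derive1 (f i)) x <= L)
  (B : 'M[R]_n) (rho : R)
  (HBpsd : psd B)
  (HBker : forall v : 'cV[R]_n, B *m v = 0 <-> incidence R src dst *m v = 0)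
  (HBedge : forall i j, i != j -> B i j != 0 -> adj src dst i j)
  (Hrho : is_largest_eigenvalue B rho)
  (xs : 'cV[R]_n) (lams : 'cV[R]_eps)
  (Hxs_feas : incidence R src dst *m xs = 0)
  (Hxs_min : forall x : 'cV[R]_n, incidence R src dst *m x = 0 -> fsum f xs <= fsum f x)
  (Hkkt : gradf f xs + (incidence R src dst)^T *m lams = 0)
  (HBxs : B *m xs = 0)
  (Hlams_range : exists y : 'cV[R]_n, lams = incidence R src dst *m y)
  (alpha beta : R) (T : nat)
  (Halpha : 0 < alpha) (Halpha_rho : alpha * rho < 1)
  (Hbeta : 0 < beta) (HT : (1 <= T)%N)
  (x : nat -> 'cV[R]_n) (lam : nat -> 'cV[R]_eps)
  (xin : nat -> nat -> 'cV[R]_n)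
  (Hlam0 : lam 0%N = 0)
  (Hxin0 : forall k, xin k.+1 0%N = x k)
  (HxinS : forall k t, (t < T)%N ->
     xin k.+1 t.+1 = xin k.+1 t - alpha *: gradf f (x k)
                     - alpha *: ((incidence R src dst)^T *m lam k)
                     - alpha *: (B *m xin k.+1 t))
  (Hx : forall k, x k.+1 = xin k.+1 T)
  (Hlam : forall k, lam k.+1 = lam k + beta *: (incidence R src dst *m x k.+1)) :
  let A := incidence R src dst in
  let C := \sum_(t < T) (1%:M - alpha *: B) ^+ t in
  let M := invmx C *m (1%:M - alpha *: B) ^+ T in
  let N := alpha^-1 *: (invmx C - M) in
  forall (eta4 : R), 0 < eta4 -> forall k : nat,
  let PC := (2 * alpha * m - alpha * eta4)%:M + (2 * alpha) *: N - (alpha * beta) *: (A^T *m A) in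
  let QC := M - (alpha * L ^+ 2 / eta4)%:M in
  sqnormS PC (x k.+1 - xs) + sqnormS QC (x k.+1 - x k)
  <= sqnormS M (x k - xs) - sqnormS M (x k.+1 - xs)
     + alpha / beta * (sqnorm (lam k - lams) - sqnorm (lam k.+1 - lams)).
Proof.
move=> A C M N eta4 eta4_gt0 k /=.
have [B_sym _] := HBpsd.
have [_ rho_max] := Hrho.
exact: (flexpd_c_descent Hxin0 HxinS Hx HBxs B_sym rho_max Halpha Halpha_rho HT
          Hkkt Hxs_feas Hlam Hbeta (ltW Hm) Hdiff2 Hbnd k eta4_gt0).
Qed.
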